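(* Let $m\geq 1$ and $n\geq 2$ be integers, let $K$ be an algebraically closed field, and let $p(x_1,\ldots,x_m)\in K\langle x_1,\ldots,x_m\rangle$ be a polynomial with zero constant term. For $k\geq 1$ and $1\leq i_1,\ldots,i_k\leq m$ let $p_{i_1\cdots i_k}$ be the commutative polynomial in $m(k+1)$ variables defined in the context. Suppose that $\mathrm{ord}(p)=r$ with $1\leq r\leq n-1$. Then: (i) $p(K)=\{0\}$, i.e. $p(c_1,\ldots,c_m)=0$ for all $c_1,\ldots,c_m\in K$; (ii) if $r\geq 2$, then $p_{i_1\cdots i_k}$ vanishes at every point of $K^{m(k+1)}$ for all $1\leq i_1,\ldots,i_k\leq m$ and all $k=1,\ldots,r-1$; consequently $p(T_n(K))\subseteq T_n(K)^{(r-1)}$; (iii) there exist $1\leq i_1,\ldots,i_r\leq m$ such that $p_{i_1\cdots i_r}$ does not vanish at some point of $K^{m(r+1)}$.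
   Context: $T_n(K)$ denotes the algebra of $n\times n$ upper triangular matrices over $K$; for $t\geq 0$, $T_n(K)^{(t)}$ is the set of upper triangular matrices whose $(i,j)$ entries vanish whenever $j-i\leq t$. For a $K$-algebra $\mathcal{A}$ let $\mathcal{T}(\mathcal{A})$ be its set of polynomial identities; with $T_1(K)=K$, the order $\mathrm{ord}(p)$ is the least $k\geq 1$ with $p\in\mathcal{T}(T_k(K))$ and $p\notin\mathcal{T}(T_{k+1}(K))$, and $\mathrm{ord}(p)=0$ if $p\notin\mathcal{T}(K)$. The polynomials $p_{i_1\cdots i_k}$: writing $p=\sum_w\lambda_w w$ as a linear combination of nonempty words $w$ in $x_1,\ldots,x_m$, for $\bar z_1,\ldots,\bar z_{k+1}\in K^m$ set $p_{i_1\cdots i_k}(\bar z_1,\ldots,\bar z_{k+1})=\sum_w\lambda_w\sum w_1(\bar z_1)w_2(\bar z_2)\cdots w_{k+1}(\bar z_{k+1})$, where the inner sum runs over all factorizations $w=w_1x_{i_1}w_2x_{i_2}\cdots w_kx_{i_k}w_{k+1}$ with $w_1,\ldots,w_{k+1}$ (possibly empty) words, $w_j(\bar z)$ denotes the value of the monomial $w_j$ at the commuting scalars $\bar z\in K^m$, and the empty word evaluates to $1$. Equivalently, these are the polynomials such that for all $u_i=(a^{(i)}_{jk})\in T_n(K)$ the $(s,t)$ entry ($s<t$) of $p(u_1,\ldots,u_m)$ equals $\sum_{k=1}^{t-s}\sum_{s=j_1<\cdots<j_{k+1}=t,\ 1\le i_1,\ldots,i_k\le m} p_{i_1\cdots i_k}(\bar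 a_{j_1j_1},\ldots,\bar a_{j_{k+1}j_{k+1}})a^{(i_1)}_{j_1j_2}\cdots a^{(i_k)}_{j_kj_{k+1}}$, with $\bar a_{jj}=(a^{(1)}_{jj},\ldots,a^{(m)}_{jj})$. *)

From HB Require Import structures.
From mathcomp Require Import all_boot all_order all_algebra.
Set Implicit Arguments. Unset Strict Implicit. Unset Printing Implicit Defensive.
Import Order.TTheory GRing.Theory Num.Theory.
Local Open Scope ring_scope.

(* A noncommutative polynomial in x_1..x_m over K is represented as a finite
   list of (word, coefficient) pairs; a word is a sequence of variable indices
   in 'I_m (index i stands for x_{i+1}).  The polynomial is the sum of the
   coefficient times the word. *)
Definition ncpoly (K : Type) (m : nat) := seq (seq 'I_m * K).

Definition zero_const_term (K : Type) (m : nat) (p : ncpoly K m) : Prop :=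
  forall wc, wc \in map fst p -> wc != [::].

Definition word_mx (K : fieldType) (m n : nat) (w : seq 'I_m)
  (A : 'I_m -> 'M[K]_n) : 'M[K]_n :=
  foldr (fun i M => A i *m M) 1%:M w.

Definition eval_mx (K : fieldType) (m n : nat) (p : ncpoly K m)
  (A : 'I_m -> 'M[K]_n) : 'M[K]_n :=
  \sum_(wc <- p) wc.2 *: word_mx wc.1 A.

Definition word_sc (K : fieldType) (m : nat) (w : seq 'I_m) (c : 'I_m -> K) : K :=
  \prod_(i <- w) c i.

Definition eval_sc (K : fieldType) (m : nat) (p : ncpoly K m) (c : 'I_m -> K) : K :=
  \sum_(wc <- p) wc.2 * word_sc wc.1 c.

Definition upper_tri (K : fieldType) (n : nat) (A : 'M[K]_n) : Prop :=
  forall i j : 'I_n, (j < i)%N -> A i j = 0.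

Definition in_Tn_t (K : fieldType) (n t : nat) (A : 'M[K]_n) : Prop :=
  upper_tri A /\ forall i j : 'I_n, (j <= i + t)%N -> A i j = 0.

Definition is_PI_T (K : fieldType) (m : nat) (p : ncpoly K m) (k : nat) : Prop :=
  forall A : 'I_m -> 'M[K]_k, (forall i, upper_tri (A i)) -> eval_mx p A = 0.

Definition has_ord (K : fieldType) (m : nat) (p : ncpoly K m) (r : nat) : Prop :=
  (r = 0%N /\ ~ is_PI_T p 1)
  \/ [/\ (1 <= r)%N, is_PI_T p r, ~ is_PI_T p r.+1 &
        forall k, (1 <= k < r)%N -> ~ (is_PI_T p k /\ ~ is_PI_T p k.+1)].

(* Sum over factorizations w = w_1 x_{i_1} w_2 ... x_{i_k} w_{k+1} of
   w_1(z 0) w_2(z 1) ... w_{k+1}(z k). *)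
Fixpoint fact_sum (K : fieldType) (m : nat) (idx : seq 'I_m)
  (z : nat -> 'I_m -> K) (w : seq 'I_m) {struct w} : K :=
  match w with
  | [::] => if idx is [::] then 1 else 0
  | a :: w' =>
      z 0%N a * fact_sum idx z w' +
      (match idx with
       | i :: idx' => (a == i)%:R * fact_sum idx' (fun t => z t.+1) w'
       | [::] => 0
       end)
  end.

Definition pcoef (K : fieldType) (m k : nat) (p : ncpoly K m)
  (idx : k.-tuple 'I_m) (z : 'I_k.+1 -> 'I_m -> K) : K :=
  \sum_(wc <- p) wc.2 * fact_sum idx (fun t => z (inord t)) wc.1.

(* For upper triangular A_1, ..., A_m, peeling off the first letter of each
   word shows that the (s,t) entry of p(A) is a sum, over first steps s -> j
   (j > s), of A_a(s,j) times the (j,t) entry of a polynomial [lderiv] whose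
   p_{i_2 ... i_k} are the p_{a i_2 ... i_k} of p.  Hence, if every
   p_{i_1 ... i_k} with k <= R vanishes, p(A) vanishes on the first R+1
   diagonals.  Conversely, the upper bidiagonal matrices with diagonal entries
   z_1, ..., z_{k+1} and superdiagonal indicators of i_1, ..., i_k carry
   p_{i_1 ... i_k}(z) in their corner entry.  So p is an identity of T_r
   exactly when all p_{i_1 ... i_k} with k < r vanish, and the three claims
   follow from ord(p) = r. *)

From HB Require Import structures.
From mathcomp Require Import all_boot all_order all_algebra.
From mathcomp Require Import zify.
From Stdlib Require Import Classical.
Set Implicit Arguments. Unset Strict Implicit. Unset Printing Implicit Defensive.
Import Order.TTheory GRing.Theory Num.Theory.
Local Open Scope ring_scope.

Section Pcoef.
Variables (K : fieldType) (m : nat).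
Implicit Types (p q : ncpoly K m) (w idx : seq 'I_m).

Definition pcoef_seq p idx (z : nat -> 'I_m -> K) : K :=
  \sum_(wc <- p) wc.2 * fact_sum idx z wc.1.

Definition ncscale (c : K) q : ncpoly K m := [seq (wc.1, c * wc.2) | wc <- q].

(* [word_lderiv c a w] is the sum, over all factorizations [w = w1 a w2], of
   [w1(c) w2]: it peels the first marked letter off a factorization. *)
Fixpoint word_lderiv (c : 'I_m -> K) (a : 'I_m) w : ncpoly K m :=
  if w is b :: w' then
    ncscale (c b) (word_lderiv c a w') ++ (if b == a then [:: (w', 1)] else [::])
  else [::].

Fixpoint lderiv (c : 'I_m -> K) (a : 'I_m) p : ncpoly K m :=
  if p is wc :: p' then ncscale wc.2 (word_lderiv c a wc.1) ++ lderiv c a p'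
  else [::].

Lemma pcoef_seq_cat p q idx z :
  pcoef_seq (p ++ q) idx z = pcoef_seq p idx z + pcoef_seq q idx z.
Proof. by rewrite /pcoef_seq big_cat. Qed.

Lemma pcoef_seq_scale c q idx z : pcoef_seq (ncscale c q) idx z = c * pcoef_seq q idx z.
Proof.
by rewrite /pcoef_seq big_map mulr_sumr; apply: eq_bigr => wc _; rewrite mulrA.
Qed.

Lemma fact_sum_cons a idx z w :
  fact_sum (a :: idx) z w = pcoef_seq (word_lderiv (z 0%N) a w) idx (fun t => z t.+1).
Proof.
elim: w => [|b w IHw]; first by rewrite /pcoef_seq big_nil.
rewrite /= pcoef_seq_cat pcoef_seq_scale -IHw; congr (_ + _).
have [_|_] := eqVneq b a; last by rewrite /pcoef_seq big_nil mul0r.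
by rewrite /pcoef_seq big_seq1 !mul1r.
Qed.

Lemma pcoef_seq_lderiv p a idx z :
  pcoef_seq (lderiv (z 0%N) a p) idx (fun t => z t.+1) = pcoef_seq p (a :: idx) z.
Proof.
elim: p => [|wc p IHp]; first by rewrite /pcoef_seq !big_nil.
rewrite /= pcoef_seq_cat pcoef_seq_scale IHp -fact_sum_cons.
by rewrite [in RHS]/pcoef_seq big_cons.
Qed.

Lemma pcoef_seq_nil p z : pcoef_seq p [::] z = eval_sc p (z 0%N).
Proof.
apply: eq_bigr => wc _; congr (_ * _).
by elim: wc.1 => [|b w IHw]; rewrite /word_sc ?big_nil ?big_cons //= IHw addr0.
Qed.

Lemma eq_fact_sum idx z z' w :
  (forall t i, (t <= size idx)%N -> z t i = z' t i) ->
  @fact_sum K m idx z w = fact_sum idx z' w.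
Proof.
elim: w idx z z' => [|b w IHw] idx z z' zz' //=.
rewrite zz' // (IHw idx z z') //; congr (_ + _).
case: idx zz' => [|i idx] zz' //=; congr (_ * _).
by apply: IHw => t a le_t_idx; apply: zz'.
Qed.

Lemma eq_pcoef_seq p idx z z' :
  (forall t i, (t <= size idx)%N -> z t i = z' t i) ->
  pcoef_seq p idx z = pcoef_seq p idx z'.
Proof. by move=> zz'; apply: eq_bigr => wc _; rewrite (eq_fact_sum _ zz'). Qed.

Lemma pcoef_seq_tuple k p (idx : k.-tuple 'I_m) z :
  pcoef_seq p idx z = pcoef p idx (fun j : 'I_k.+1 => z j).
Proof. by apply: eq_pcoef_seq => t i; rewrite size_tuple -ltnS => /inordK ->. Qed.

End Pcoef.

Section UpperTriangular.
Variables (K : fieldType) (m N : nat).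
Implicit Types (p q : ncpoly K m) (w idx : seq 'I_m) (A : 'I_m -> 'M[K]_N).

Lemma eval_mxE p A s t : eval_mx p A s t = \sum_(wc <- p) wc.2 * word_mx wc.1 A s t.
Proof. by rewrite /eval_mx summxE; apply: eq_bigr => wc _; rewrite mxE. Qed.

Lemma eval_mx_cat p q A : eval_mx (p ++ q) A = eval_mx p A + eval_mx q A.
Proof. by rewrite /eval_mx big_cat. Qed.

Lemma eval_mx_scale c q A : eval_mx (ncscale c q) A = c *: eval_mx q A.
Proof.
by rewrite /eval_mx big_map scaler_sumr; apply: eq_bigr => wc _; rewrite scalerA.
Qed.

Lemma upper_tri1 : upper_tri (1%:M : 'M[K]_N).
Proof. by move=> i j lt_ji; rewrite mxE eq_sym -val_eqE (ltn_eqF lt_ji). Qed.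

Lemma upper_tri_mul (B C : 'M[K]_N) : upper_tri B -> upper_tri C -> upper_tri (B *m C).
Proof.
move=> utB utC i j lt_ji; rewrite mxE big1 // => k _.
have [lt_ki|le_ik] := ltnP k i; first by rewrite utB // mul0r.
by rewrite utC ?mulr0 // (leq_trans lt_ji).
Qed.

Section UpperTriangularFamily.
Variable A : 'I_m -> 'M[K]_N.
Hypothesis utA : forall i, upper_tri (A i).

Lemma upper_tri_word w : upper_tri (word_mx w A).
Proof. by elim: w => [|b w IHw]; [exact: upper_tri1 | exact: upper_tri_mul]. Qed.

Lemma upper_tri_eval p : upper_tri (eval_mx p A).
Proof.
by move=> i j lt_ji; rewrite eval_mxE big1 // => wc _; rewrite upper_tri_word ?mulr0.
Qed.

Lemma word_mx_diag w s : word_mx w A s s = word_sc w (fun i => A i s s).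
Proof.
elim: w => [|b w IHw] /=; first by rewrite mxE eqxx /word_sc big_nil.
rewrite mxE (bigD1 s) //= big1 ?addr0; first by rewrite IHw /word_sc big_cons.
move=> j ne_js; have [lt_js|lt_sj|eq_js] := ltngtP j s.
- by rewrite utA // mul0r.
- by rewrite upper_tri_word // mulr0.
- by rewrite (val_inj eq_js) eqxx in ne_js.
Qed.

Lemma eval_mx_diag p s : eval_mx p A s s = eval_sc p (fun i => A i s s).
Proof. by rewrite eval_mxE; apply: eq_bigr => wc _; rewrite word_mx_diag. Qed.

End UpperTriangularFamily.

(* Off the diagonal, the first letter of each word leaves row [s] through some
   column [j != s]; the letters read while staying at [s] contribute scalars. *)
Lemma word_mx_offdiag w A (s t : 'I_N) : s != t ->
  word_mx w A s t = \sum_a \sum_(j | j != s)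
     A a s j * eval_mx (word_lderiv (fun i => A i s s) a w) A j t.
Proof.
move=> ne_st; elim: w => [|b w IHw] /=.
  rewrite mxE (negPf ne_st) big1 // => a _; rewrite big1 // => j _.
  by rewrite /eval_mx big_nil mxE mulr0.
rewrite mxE (bigD1 s) //= IHw mulr_sumr; apply/esym.
under eq_bigr => a _ do under eq_bigr => j _ do
  rewrite eval_mx_cat eval_mx_scale !mxE mulrDr mulrCA.
under eq_bigr => a _ do rewrite big_split /= -mulr_sumr.
rewrite big_split /=; congr (_ + _).
rewrite (bigD1 b) //= [X in _ + X]big1 ?addr0; last first.
  move=> a ne_ab; rewrite big1 // => j _.
  by rewrite eq_sym (negPf ne_ab) /eval_mx big_nil mxE mulr0.
by apply: eq_bigr => j _; rewrite eqxx /eval_mx big_seq1 scale1r.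
Qed.

Lemma eval_mx_offdiag p A (s t : 'I_N) : s != t ->
  eval_mx p A s t = \sum_a \sum_(j | j != s)
     A a s j * eval_mx (lderiv (fun i => A i s s) a p) A j t.
Proof.
move=> ne_st; elim: p => [|wc p IHp] /=.
  rewrite /eval_mx big_nil mxE big1 // => a _; rewrite big1 // => j _.
  by rewrite mxE mulr0.
rewrite /eval_mx big_cons -/(eval_mx _ _) !mxE IHp (word_mx_offdiag _ _ ne_st).
rewrite mulr_sumr -big_split; apply: eq_bigr => a _.
rewrite mulr_sumr -big_split; apply: eq_bigr => j _ /=.
by rewrite -/(eval_mx _ _) eval_mx_cat eval_mx_scale !mxE mulrDr mulrCA.
Qed.

Lemma eval_mx_band_eq0 R p A : (forall i, upper_tri (A i)) ->
  (forall idx z, (size idx <= R)%N -> pcoef_seq p idx z = 0) ->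
  forall s t : 'I_N, (t <= s + R)%N -> eval_mx p A s t = 0.
Proof.
move=> utA; elim: R p => [|R IHR] p pcoef0 s t le_t_sR;
  have [lt_ts|le_st] := ltnP t s; try exact: upper_tri_eval;
  have [<-|ne_st] := eqVneq s t;
  try by rewrite eval_mx_diag // -(pcoef_seq_nil p (fun=> fun i => A i s s)) pcoef0.
  by move: ne_st; rewrite -val_eqE /=; lia.
rewrite eval_mx_offdiag // big1 // => a _; rewrite big1 // => j ne_js.
have [lt_js|lt_sj|eq_js] := ltngtP j s.
- by rewrite utA // mul0r.
- rewrite IHR ?mulr0 //; last by lia.
  move=> idx z le_idx_R.
  have /= -> := pcoef_seq_lderiv p a idx
    (fun t => if t is t'.+1 then z t' else fun i => A i s s).
  by apply: pcoef0; rewrite /= ltnS.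
- by rewrite (val_inj eq_js) eqxx in ne_js.
Qed.

(* The upper bidiagonal matrices with diagonals [z 0, z 1, ...] and
   superdiagonals the indicators of [idx]: a path from [s] to [size idx] must
   climb one step at a time, reading the letters of [idx] in order. *)
Definition bidiag_mx idx (z : nat -> 'I_m -> K) (a : 'I_m) : 'M[K]_N :=
  \matrix_(i, j) if i == j then z i a
                 else ((j == i.+1 :> nat) && (onth idx i == Some a))%:R.

Lemma bidiag_mx_diag idx z a i : bidiag_mx idx z a i i = z i a.
Proof. by rewrite mxE eqxx. Qed.

Lemma bidiag_mx_offdiag idx z a (i j : 'I_N) : i != j ->
  bidiag_mx idx z a i j = ((j == i.+1 :> nat) && (onth idx i == Some a))%:R.
Proof. by move=> ne_ij; rewrite mxE (negPf ne_ij). Qed.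

Lemma upper_tri_bidiag idx z a : upper_tri (bidiag_mx idx z a).
Proof.
move=> i j lt_ji; rewrite bidiag_mx_offdiag; last by rewrite -val_eqE /=; lia.
by rewrite (_ : (j == i.+1 :> nat) = false) //; apply/eqP; lia.
Qed.

Lemma eval_bidiag p idx z (s k : 'I_N) : k = size idx :> nat -> (s <= k)%N ->
  eval_mx p (bidiag_mx idx z) s k = pcoef_seq p (drop s idx) (fun t => z (s + t)%N).
Proof.
move=> k_idx le_sk; move Ed: (k - s)%N => d.
elim: d s p le_sk Ed => [|d IHd] s p le_sk Ed.
  have -> : s = k by apply: val_inj => /=; lia.
  rewrite eval_mx_diag; last exact: upper_tri_bidiag.
  rewrite -(pcoef_seq_nil p (fun=> fun a => bidiag_mx idx z a k k)) k_idx drop_size.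
  apply: eq_pcoef_seq => t a /=; rewrite leqn0 => /eqP->.
  by rewrite bidiag_mx_diag addn0 k_idx.
have lt_s_idx : (s < size idx)%N by lia.
have [a idx_s] : exists a, onth idx s = Some a.
  by move: (onthTE idx s); rewrite lt_s_idx; case: onth => // a _; exists a.
have lt_s1N : (s.+1 < N)%N by have := ltn_ord k; lia.
pose s1 := Ordinal lt_s1N.
have ne_ss1 : s != s1 by rewrite -val_eqE /=; lia.
have bidiag_row_s j b : j != s ->
    bidiag_mx idx z b s j = ((j == s1) && (b == a))%:R.
  rewrite eq_sym => ne_sj; rewrite bidiag_mx_offdiag // idx_s (inj_eq Some_inj).
  by rewrite [b == a]eq_sym.
rewrite eval_mx_offdiag; last by rewrite -val_eqE /=; lia.
rewrite (bigD1 a) //= [X in _ + X]big1 ?addr0 => [|b ne_ba]; last first.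
  by rewrite big1 // => j ne_js; rewrite bidiag_row_s // (negPf ne_ba) andbF mul0r.
rewrite (bigD1 s1) 1?eq_sym //= big1 ?addr0 => [|j /andP[ne_js ne_js1]]; last first.
  by rewrite bidiag_row_s // (negPf ne_js1) mul0r.
rewrite bidiag_row_s 1?eq_sym // !eqxx mul1r IHd /=; [| lia | lia].
have /= -> := pcoef_seq_lderiv p a (drop s.+1 idx)
  (fun t => if t is t'.+1 then z (s.+1 + t')%N else fun i => bidiag_mx idx z i s s).
rewrite (drop_nth a lt_s_idx) (onth_nth a _ _ _ idx_s).
by apply: eq_pcoef_seq => -[|t] i _ /=; rewrite ?bidiag_mx_diag ?addn0 ?addnS.
Qed.

End UpperTriangular.

Lemma is_PI_TP (K : fieldType) (m r : nat) (p : ncpoly K m) :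
  is_PI_T p r <-> forall idx z, (size idx < r)%N -> pcoef_seq p idx z = 0.
Proof.
split=> [PIr idx z lt_idx_r | pcoef0 A utA].
  have r_gt0 : (0 < r)%N by lia.
  have := PIr _ (fun a => upper_tri_bidiag idx z a).
  move=> /matrixP /(_ (Ordinal r_gt0) (Ordinal lt_idx_r)); rewrite mxE => <-.
  by rewrite eval_bidiag ?drop0.
apply/matrixP => s t; rewrite mxE; apply: (eval_mx_band_eq0 (R := r.-1)) => //.
  by move=> idx z le_idx; apply: pcoef0; have := ltn_ord s; lia.
by have := ltn_ord t; lia.
Qed.

Theorem lemma3p4 (K : closedFieldType) (m n r : nat) (p : ncpoly K m) :
  (1 <= m)%N -> (2 <= n)%N -> zero_const_term p ->
  has_ord p r -> (1 <= r)%N -> (r <= n - 1)%N ->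
  [/\ (forall c : 'I_m -> K, eval_sc p c = 0),
      ((2 <= r)%N ->
         (forall k : nat, (1 <= k <= r - 1)%N ->
            forall (idx : k.-tuple 'I_m) (z : 'I_k.+1 -> 'I_m -> K),
              pcoef p idx z = 0)
         /\ (forall A : 'I_m -> 'M[K]_n, (forall i, upper_tri (A i)) ->
               in_Tn_t (r - 1) (eval_mx p A)))
    & exists (idx : r.-tuple 'I_m) (z : 'I_r.+1 -> 'I_m -> K),
        pcoef p idx z != 0].
Proof.
(* Only ord(p) = r >= 1 is needed. *)
move=> _ _ _ [[r0 _]|[_ PIr notPIr _]] r_gt0 _; first by rewrite r0 in r_gt0.
have /is_PI_TP pcoef0 := PIr.
split.
- by move=> c; rewrite -(pcoef_seq_nil p (fun=> c)); apply: pcoef0.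
- move=> _; split=> [k /andP[_ le_k_r] idx z | A utA].
    by apply: pcoef0; rewrite size_tuple; lia.
  split=> [|i j le_j_ir]; first exact: upper_tri_eval.
  apply: (eval_mx_band_eq0 (R := r - 1)) => // idx z le_idx.
  by apply: pcoef0; lia.
- apply: NNPP => no_idx; apply/notPIr/is_PI_TP => idx z.
  rewrite ltnS leq_eqVlt => /orP[size_idx|]; last exact: pcoef0.
  have [//|nz] := eqVneq (pcoef_seq p idx z) 0.
  by case: no_idx; exists (Tuple size_idx), (fun j => z j); rewrite -pcoef_seq_tuple.
Qed.
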